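(* Let $(M,g,J)$ be a Kaehler manifold. The following are equivalent: (a) $M$ is semisymmetric, i.e. $R\cdot R=0$; (b) $R\cdot R(u,v,v,u;x,Jx)=0$ for every $p\in M$ and all $x,u,v\in T_pM$; (c) $R\cdot R(u,Ju,Ju,u;x,y)=0$ for every $p\in M$ and all $x,y,u\in T_pM$; (d) $R\cdot R(u,Ju,Ju,u;x,Jx)=0$ for every $p\in M$ and all $x,u\in T_pM$.
   Context: A Kaehler manifold $(M,g,J)$: $J^2=-\mathrm{Id}$, $g(JX,JY)=g(X,Y)$, $\nabla J=0$ for the Levi-Civita connection. Curvature: $R(X,Y)Z=\nabla_X\nabla_YZ-\nabla_Y\nabla_XZ-\nabla_{[X,Y]}Z$, $R(X,Y,Z,W)=g(R(X,Y)Z,W)$. The $(0,6)$-tensor $R\cdot R$ is $R\cdot R(X_1,X_2,X_3,X_4;X,Y)=-R(R(X,Y)X_1,X_2,X_3,X_4)-R(X_1,R(X,Y)X_2,X_3,X_4)-R(X_1,X_2,R(X,Y)X_3,X_4)-R(X_1,X_2,X_3,R(X,Y)X_4)$. *)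

(* Pointwise (tangent-space) algebraic model of the curvature
   of a Kaehler manifold. *)
From HB Require Import structures.
From mathcomp Require Import all_boot all_order all_algebra.
From mathcomp Require Import reals.
Set Implicit Arguments. Unset Strict Implicit. Unset Printing Implicit Defensive.
Import Order.TTheory GRing.Theory Num.Theory.
Local Open Scope ring_scope.

Section KaehlerPoint.
Variables (R : realType) (n : nat).
Local Notation V := 'rV[R]_n.

Definition riemannian_metric (g : V -> V -> R) : Prop :=
  [/\ forall a x y z, g (a *: x + y) z = a * g x z + g y z,
      forall x y, g x y = g y x &
      forall x, x != 0 -> 0 < g x x].

Definition almost_hermitian (g : V -> V -> R) (J : V -> V) : Prop :=
  [/\ forall a x y, J (a *: x + y) = a *: J x + J y,
      forall x, J (J x) = - x &
      forall x y, g (J x) (J y) = g x y].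

(* Rc X Y Z = R(X,Y)Z : the curvature operator at p of the Levi-Civita
   connection of a Kaehler metric.  Pointwise it is trilinear, skew in (X,Y),
   each R(X,Y) is g-skew-adjoint, it satisfies the first Bianchi identity,
   and (from nabla J = 0) each R(X,Y) commutes with J. *)
Definition kaehler_curvature (g : V -> V -> R) (J : V -> V)
    (Rc : V -> V -> V -> V) : Prop :=
  [/\ forall a x x' y z, Rc (a *: x + x') y z = a *: Rc x y z + Rc x' y z,
      forall a x y y' z, Rc x (a *: y + y') z = a *: Rc x y z + Rc x y' z &
      forall a x y z z', Rc x y (a *: z + z') = a *: Rc x y z + Rc x y z'] /\
  [/\ forall x y z, Rc x y z = - Rc y x z,
      forall x y z w, g (Rc x y z) w = - g (Rc x y w) z,
      forall x y z, Rc x y z + Rc y z x + Rc z x y = 0 &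
      forall x y z, Rc x y (J z) = J (Rc x y z)].

Definition curv4 (g : V -> V -> R) (Rc : V -> V -> V -> V) (x y z w : V) : R :=
  g (Rc x y z) w.

Definition RdotR (g : V -> V -> R) (Rc : V -> V -> V -> V)
    (x1 x2 x3 x4 x y : V) : R :=
  - curv4 g Rc (Rc x y x1) x2 x3 x4
  - curv4 g Rc x1 (Rc x y x2) x3 x4
  - curv4 g Rc x1 x2 (Rc x y x3) x4
  - curv4 g Rc x1 x2 x3 (Rc x y x4).

End KaehlerPoint.

(* For fixed x, y the tensor R.R(-,-,-,-; x, y) is the action of the
   endomorphism R(x,y) on R as a derivation.  Since R(x,y) is additive and
   commutes with J, this is again an algebraic curvature tensor, J-invariant in
   its last pair.  Such a tensor vanishes as soon as its sectional curvature
   T(u,v,v,u) does, and polarizing the holomorphic sectional curvature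
   T(u,Ju,Ju,u) at u +- v and u +- Jv recovers T(u,v,v,u).  This handles a
   fixed pair (x, y); the restriction y = Jx in (b) and (d) is removed because
   R.R(...; x, y) is skew in (x, y) and invariant under (x, y) |-> (Jx, Jy). *)

From HB Require Import structures.
From mathcomp Require Import all_boot all_order all_algebra.
From mathcomp Require Import reals lra.
Set Implicit Arguments. Unset Strict Implicit. Unset Printing Implicit Defensive.
Import Order.TTheory GRing.Theory Num.Theory.
Local Open Scope ring_scope.

Lemma morph0 (U W : zmodType) (f : U -> W) : {morph f : x y / x + y} -> f 0 = 0.
Proof. by move=> fD; apply: (addrI (f 0)); rewrite -fD !addr0. Qed.

Lemma morphN (U W : zmodType) (f : U -> W) :
  {morph f : x y / x + y} -> {morph f : x / - x}.
Proof. by move=> fD x; apply/eqP; rewrite -addr_eq0 -fD addNr (morph0 fD). Qed.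

Record curvature_tensor (R V : zmodType) (T : V -> V -> V -> V -> R) : Prop :=
  CurvatureTensor {
    curvD1 : forall x x' y z w, T (x + x') y z w = T x y z w + T x' y z w;
    curvD2 : forall x y y' z w, T x (y + y') z w = T x y z w + T x y' z w;
    curvD3 : forall x y z z' w, T x y (z + z') w = T x y z w + T x y z' w;
    curvD4 : forall x y z w w', T x y z (w + w') = T x y z w + T x y z w';
    curv_skew12 : forall x y z w, T x y z w = - T y x z w;
    curv_skew34 : forall x y z w, T x y z w = - T x y w z;
    curv_bianchi : forall x y z w, T x y z w + T y z x w + T z x y w = 0
  }.

(* The derivation action D.T; R.R(x1,x2,x3,x4; x, y) is convertible to
   curv_act (R(x,y)) R. *)
Definition curv_act (R V : zmodType) (D : V -> V) (T : V -> V -> V -> V -> R)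
    x1 x2 x3 x4 : R :=
  - T (D x1) x2 x3 x4 - T x1 (D x2) x3 x4 - T x1 x2 (D x3) x4 - T x1 x2 x3 (D x4).

Section CurvatureTensor.
Variables (R : realFieldType) (V : zmodType) (T : V -> V -> V -> V -> R).
Hypothesis hT : curvature_tensor T.

Let TD1 := curvD1 hT.
Let TD2 := curvD2 hT.
Let TD3 := curvD3 hT.
Let TD4 := curvD4 hT.
Let skew12 := curv_skew12 hT.
Let skew34 := curv_skew34 hT.
Let bianchi := curv_bianchi hT.

Lemma curvN1 x y z w : T (- x) y z w = - T x y z w.
Proof. exact: (morphN (fun x x' => TD1 x x' y z w)). Qed.

Lemma curvN2 x y z w : T x (- y) z w = - T x y z w.
Proof. exact: (morphN (fun y y' => TD2 x y y' z w)). Qed.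

Lemma curvN3 x y z w : T x y (- z) w = - T x y z w.
Proof. exact: (morphN (fun z z' => TD3 x y z z' w)). Qed.

Lemma curvN4 x y z w : T x y z (- w) = - T x y z w.
Proof. exact: (morphN (TD4 x y z)). Qed.

Lemma curv_swap x y z w : T x y z w = T y x w z.
Proof. by rewrite skew12 skew34 opprK. Qed.

Lemma curv_pair_sym x y z w : T x y z w = T z w x y.
Proof.
move: (bianchi y z x w) (bianchi z x w y) (bianchi x w y z) (bianchi w y z x).
move: (skew34 y z x w) (skew34 z x y w) (skew34 x w z y) (skew34 w y x z).
move: (skew12 y x w z) (skew34 x y w z) (skew12 z w y x) (skew34 w z y x).
move: (skew12 w z x y); intros; lra.
Qed.

Lemma curv_eq0_of_sectional0 :
  (forall x y, T x y y x = 0) -> forall x y z w, T x y z w = 0.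
Proof.
move=> K0.
have T_xyzx x y z : T x y z x = 0.
  have := K0 x (y + z); rewrite TD2 !TD3 !K0.
  rewrite (curv_pair_sym x z) [T y x x z]curv_swap; lra.
have skew14 x y z w : T x y z w = - T w y z x.
  have := T_xyzx (x + w) y z; rewrite TD1 !TD4 !T_xyzx; lra.
have cycle x y z w : T y z x w = T x y z w.
  by rewrite skew14 curv_pair_sym -skew34.
move=> x y z w; have := bianchi x y z w.
rewrite (cycle y z x w) !(cycle x y z w); lra.
Qed.

Lemma curv_act_curvature (D : V -> V) :
  {morph D : x y / x + y} -> curvature_tensor (curv_act D T).
Proof.
move=> DD; split; rewrite /curv_act.
1-4: by move=> *; rewrite DD !(TD1, TD2, TD3, TD4); lra.
- move=> x1 x2 x3 x4.
  move: (skew12 (D x1) x2 x3 x4) (skew12 x1 (D x2) x3 x4).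
  move: (skew12 x1 x2 (D x3) x4) (skew12 x1 x2 x3 (D x4)); intros; lra.
- move=> x1 x2 x3 x4.
  move: (skew34 (D x1) x2 x3 x4) (skew34 x1 (D x2) x3 x4).
  move: (skew34 x1 x2 (D x3) x4) (skew34 x1 x2 x3 (D x4)); intros; lra.
- move=> x1 x2 x3 x4.
  move: (bianchi (D x1) x2 x3 x4) (bianchi (D x2) x3 x1 x4).
  move: (bianchi (D x3) x1 x2 x4) (bianchi x1 x2 x3 (D x4)); intros; lra.
Qed.

Section ComplexStructure.
Variable J : V -> V.
Hypothesis JD : {morph J : x y / x + y}.
Hypothesis JJ : forall x, J (J x) = - x.
Hypothesis TJ : forall x y z w, T x y (J z) (J w) = T x y z w.

Let JN := morphN JD.

Lemma curv_act_J (D : V -> V) : (forall x, D (J x) = J (D x)) ->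
  forall x1 x2 x3 x4, curv_act D T x1 x2 (J x3) (J x4) = curv_act D T x1 x2 x3 x4.
Proof. by move=> DJ x1 x2 x3 x4; rewrite /curv_act !DJ !TJ. Qed.

Lemma curv_J12 x y z w : T (J x) (J y) z w = T x y z w.
Proof. by rewrite curv_pair_sym TJ curv_pair_sym. Qed.

Lemma curv_J3 x y z w : T x y (J z) w = - T x y z (J w).
Proof. by rewrite -[T x y z (J w)]TJ JJ curvN4 opprK. Qed.

Local Notation H u := (T u (J u) (J u) u).

Lemma holomorphic_polarization u v :
  H (u + v) + H (u - v) =
  2 * H u + 2 * H v + 4 * (T u v v u + 3 * T u (J v) (J v) u).
Proof.
have t2 : T u (J v) (J u) v = T u (J v) (J v) u by rewrite curv_J3 -skew34.
have t1 : T u (J u) (J v) v = T u v v u + T u (J v) (J v) u.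
  have := bianchi u (J u) (J v) v.
  rewrite curv_J12 [T u v u v]skew34 [T (J v) u _ _]skew12 t2; lra.
have t3 : T v (J u) (J u) v = T u (J v) (J v) u.
  by rewrite curv_J3 curv_pair_sym -skew34 t2.
have t4 : T v (J u) (J v) u = T u (J v) (J v) u.
  by rewrite curv_pair_sym curv_swap t2.
have t5 : T v (J v) (J u) u = T u v v u + T u (J v) (J v) u.
  by rewrite curv_pair_sym curv_swap t1.
rewrite !JD !JN !(TD1, TD2, TD3, TD4) !(curvN1, curvN2, curvN3, curvN4) !opprK.
rewrite t1 t2 t3 t4 t5; lra.
Qed.

Lemma sectional0_of_holomorphic0 :
  (forall u, H u = 0) -> forall u v, T u v v u = 0.
Proof.
move=> H0 u v.
(* T u v v u + 3 T u Jv Jv u = 0 = T u Jv Jv u + 3 T u v v u. *)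
have := holomorphic_polarization u v; have := holomorphic_polarization u (J v).
rewrite !H0 JJ curvN2 curvN3 opprK; lra.
Qed.

End ComplexStructure.
End CurvatureTensor.

Lemma skew_form_eq0_of_J (R : realFieldType) (V : zmodType) (J : V -> V)
    (F : V -> V -> R) :
  {morph J : x y / x + y} -> (forall x, J (J x) = - x) ->
  (forall x, {morph F x : y y' / y + y'}) -> (forall x y, F x y = - F y x) ->
  (forall x y, F (J x) (J y) = F x y) ->
  (forall x, F x (J x) = 0) -> forall x y, F x y = 0.
Proof.
move=> JD JJ FD Fskew FJ F0 x y.
have FDl a b c : F (a + b) c = F a c + F b c by rewrite Fskew FD opprD -!Fskew.
(* F (x + J y) (J x - y) = - 2 F x y. *)
have := F0 (x + J y); rewrite JD JJ FDl !FD !(morphN (FD _)) F0 FJ.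
rewrite [F (J y) y]Fskew F0 [F y x]Fskew; lra.
Qed.

Section KaehlerCurvature.
Variables (R : realType) (n : nat).
Local Notation V := 'rV[R]_n.
Variables (g : V -> V -> R) (J : V -> V) (Rc : V -> V -> V -> V).
Hypotheses (Hg : riemannian_metric g) (HJ : almost_hermitian g J)
  (HR : kaehler_curvature g J Rc).

Let gL : forall a x y z, g (a *: x + y) z = a * g x z + g y z.
Proof. by case: Hg. Qed.
Let g_sym : forall x y, g x y = g y x.
Proof. by case: Hg. Qed.
Let g_pos : forall x, x != 0 -> 0 < g x x.
Proof. by case: Hg. Qed.
Let JL : linear J.
Proof. by case: HJ. Qed.
Let JJ : forall x, J (J x) = - x.
Proof. by case: HJ. Qed.
Let gJ : forall x y, g (J x) (J y) = g x y.
Proof. by case: HJ. Qed.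
Let RL1 : forall a x x' y z, Rc (a *: x + x') y z = a *: Rc x y z + Rc x' y z.
Proof. by case: HR => -[]. Qed.
Let RL2 : forall a x y y' z, Rc x (a *: y + y') z = a *: Rc x y z + Rc x y' z.
Proof. by case: HR => -[]. Qed.
Let RL3 : forall a x y z z', Rc x y (a *: z + z') = a *: Rc x y z + Rc x y z'.
Proof. by case: HR => -[]. Qed.
Let Rskew : forall x y z, Rc x y z = - Rc y x z.
Proof. by case: HR => _ []. Qed.
Let Rskew_adj : forall x y z w, g (Rc x y z) w = - g (Rc x y w) z.
Proof. by case: HR => _ []. Qed.
Let Rbianchi : forall x y z, Rc x y z + Rc y z x + Rc z x y = 0.
Proof. by case: HR => _ []. Qed.
Let RJ : forall x y z, Rc x y (J z) = J (Rc x y z).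
Proof. by case: HR => _ []. Qed.

Let gDl z : {morph g^~ z : x y / x + y}.
Proof. exact: (GRing.semilinear_linear (fun a x y => gL a x y z)).2. Qed.
Let gDr x : {morph g x : y y' / y + y'}.
Proof. by move=> y y'; rewrite g_sym gDl !(g_sym x). Qed.
Let JD : {morph J : x y / x + y}.
Proof. exact: (GRing.semilinear_linear JL).2. Qed.
Let RD1 y z : {morph (fun x => Rc x y z) : x x' / x + x'}.
Proof. exact: (GRing.semilinear_linear (fun a x x' => RL1 a x x' y z)).2. Qed.
Let RD2 x z : {morph Rc x ^~ z : y y' / y + y'}.
Proof. exact: (GRing.semilinear_linear (fun a y y' => RL2 a x y y' z)).2. Qed.
Let RD3 x y : {morph Rc x y : z z' / z + z'}.
Proof. exact: (GRing.semilinear_linear (fun a z z' => RL3 a x y z z')).2. Qed.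

Lemma curv4_curvature : curvature_tensor (curv4 g Rc).
Proof.
split; rewrite /curv4 => *.
- by rewrite RD1 gDl.
- by rewrite RD2 gDl.
- by rewrite RD3 gDl.
- by rewrite gDr.
- by rewrite Rskew (morphN (gDl _)).
- exact: Rskew_adj.
- by rewrite -!gDl Rbianchi (morph0 (gDl _)).
Qed.

Lemma curv4_J x y z w : curv4 g Rc x y (J z) (J w) = curv4 g Rc x y z w.
Proof. by rewrite /curv4 RJ gJ. Qed.

Lemma kaehler_curvatureJJ x y z : Rc (J x) (J y) z = Rc x y z.
Proof.
have g_nondeg v : (forall w, g v w = 0) -> v = 0.
  by move=> v0; apply/eqP; apply: contraT => /g_pos; rewrite v0 ltxx.
have curvJ w : g (Rc (J x) (J y) z) w = g (Rc x y z) w :=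
  curv_J12 curv4_curvature curv4_J x y z w.
apply/eqP; rewrite -subr_eq0; apply/eqP/g_nondeg => w.
by rewrite gDl (morphN (gDl _)) curvJ subrr.
Qed.

Lemma RdotR_curvature x y :
  curvature_tensor (fun x1 x2 x3 x4 => RdotR g Rc x1 x2 x3 x4 x y).
Proof. exact (curv_act_curvature curv4_curvature (RD3 x y)). Qed.

Lemma RdotR_J x y x1 x2 x3 x4 :
  RdotR g Rc x1 x2 (J x3) (J x4) x y = RdotR g Rc x1 x2 x3 x4 x y.
Proof. exact (curv_act_J curv4_J (RJ x y) x1 x2 x3 x4). Qed.

Lemma RdotR_eq0_of_J x1 x2 x3 x4 :
  (forall x, RdotR g Rc x1 x2 x3 x4 x (J x) = 0) ->
  forall x y, RdotR g Rc x1 x2 x3 x4 x y = 0.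
Proof.
have hc := curv4_curvature.
apply: skew_form_eq0_of_J JD JJ _ _ _ => [x y y'|x y|x y].
- rewrite /RdotR !RD2 !(curvD1 hc, curvD2 hc, curvD3 hc, curvD4 hc); lra.
- rewrite /RdotR !(Rskew y x) !(curvN1 hc, curvN2 hc, curvN3 hc, curvN4 hc); lra.
- by rewrite /RdotR !kaehler_curvatureJJ.
Qed.

Lemma RdotR_eq0_of_sectional0 x y :
  (forall u v, RdotR g Rc u v v u x y = 0) ->
  forall x1 x2 x3 x4, RdotR g Rc x1 x2 x3 x4 x y = 0.
Proof. exact: curv_eq0_of_sectional0 (RdotR_curvature x y). Qed.

Lemma RdotR_sectional0_of_holomorphic0 x y :
  (forall u, RdotR g Rc u (J u) (J u) u x y = 0) ->
  forall u v, RdotR g Rc u v v u x y = 0.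
Proof.
exact (sectional0_of_holomorphic0 (RdotR_curvature x y) JD JJ (RdotR_J x y)).
Qed.

End KaehlerCurvature.

Theorem mainTheorem9 (R : realType) (n : nat) (g : 'rV[R]_n -> 'rV[R]_n -> R)
    (J : 'rV[R]_n -> 'rV[R]_n)
    (Rc : 'rV[R]_n -> 'rV[R]_n -> 'rV[R]_n -> 'rV[R]_n) :
  riemannian_metric g -> almost_hermitian g J -> kaehler_curvature g J Rc ->
  let a := forall x1 x2 x3 x4 x y, RdotR g Rc x1 x2 x3 x4 x y = 0 in
  let b := forall x u v, RdotR g Rc u v v u x (J x) = 0 in
  let c := forall x y u, RdotR g Rc u (J u) (J u) u x y = 0 in
  let d := forall x u, RdotR g Rc u (J u) (J u) u x (J x) = 0 in
  [/\ a <-> b, a <-> c & a <-> d].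
Proof.
move=> Hg HJ HR a b c d; rewrite /a /b /c /d.
have sectional := RdotR_eq0_of_sectional0 Hg HR.
have holomorphic := RdotR_sectional0_of_holomorphic0 Hg HJ HR.
have J_polar := RdotR_eq0_of_J Hg HJ HR.
split; split=> [Ha * | H]; try exact: Ha.
- move=> x1 x2 x3 x4; apply: J_polar => x; apply: sectional; exact: H.
- move=> x1 x2 x3 x4 x y; apply: sectional; apply: holomorphic => u; exact: H.
- move=> x1 x2 x3 x4; apply: J_polar => x.
  by apply: sectional; apply: holomorphic; exact: H.
Qed.
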